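(* Let $A$ be an $n\times n$ matrix with a designated set of large positions, and let $(X,Y)$ be a $q$-good restriction. Let $X_1,X_2\subseteq X$ and $Y_1,Y_2\subseteq Y$ with $|Y_1|=|X_1|$, $|Y_2|=|X_2|$. Suppose that $(X_1,Y_1)$ has a $p_1$-strong line and $(X_2,Y_2)$ has a $p_2$-strong line, where $(1-p_1)|X_1|>1$, $(1-p_2)|X_2|>1$ and \[(1-p_1)(1-p_2)\frac{|X_1||X_2|}{|X|^2}\ge 4q.\] Then these two strong lines are the same line of $A$: either both are row $i$ for the same $i$, or both are column $j$ for the same $j$.
   Context: Let $A=(a_{ij})_{i,j\in[n]}$ with a designated set $L\subseteq[n]\times[n]$ of large positions. A restriction is $(X,Y)$ with $X,Y\subseteq[n]$, $|X|=|Y|$; a generalized diagonal of $A[X,Y]$ is $\{(i,\sigma(i)):i\in X\}$ for a bijection $\sigma:X\to Y$, random meaning uniform $\sigma$; it is good if it contains exactly one large position; $(X,Y)$ is $q$-good if a random generalized diagonal is good with probability $\ge1-q$. For $i\in X$, row $i$ is $p$-strong for $(X,Y)$ if at least $(1-p)|Y|$ of the positions $\{(i,j):j\in Y\}$ are large; for $j\in Y$, column $j$ is $p$-strong for $(X,Y)$ if at least $(1-p)|X|$ of $\{(i,j):i\in X\}$ are large. $(X,Y)$ has a $p$-strong line if some row or column is $p$-strong for it. *)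

From HB Require Import structures.
From mathcomp Require Import all_boot all_order all_algebra.
Set Implicit Arguments. Unset Strict Implicit. Unset Printing Implicit Defensive.
Import Order.TTheory GRing.Theory Num.Theory.

(* Bijections sigma : X -> Y, encoded as finite functions on 'I_n that map X
   injectively into Y and are the identity outside X (a canonical normalisation,
   so these are in one-to-one correspondence with the bijections X -> Y when
   #|X| = #|Y|). *)
Definition bij_on (n : nat) (X Y : {set 'I_n}) : {set {ffun 'I_n -> 'I_n}} :=
  [set f : {ffun 'I_n -> 'I_n} |
     [forall i in X, f i \in Y]
     && [forall i in X, forall i' in X, (f i == f i') ==> (i == i')]
     && [forall i, (i \notin X) ==> (f i == i)]].

Definition good_diag (n : nat) (L : {set 'I_n * 'I_n}) (X : {set 'I_n})
    (f : {ffun 'I_n -> 'I_n}) : bool :=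
  #|[set i in X | (i, f i) \in L]| == 1%N.

Definition restriction (n : nat) (X Y : {set 'I_n}) : Prop := #|X| = #|Y|.

Definition q_good (R : realFieldType) (n : nat) (L : {set 'I_n * 'I_n})
    (q : R) (X Y : {set 'I_n}) : Prop :=
  restriction X Y /\
  (#|[set f in bij_on X Y | good_diag L X f]|%:R / #|bij_on X Y|%:R
     >= 1 - q)%R.

Inductive line (n : nat) : Type := Row of 'I_n | Col of 'I_n.

Definition row_strong (R : realFieldType) (n : nat) (L : {set 'I_n * 'I_n})
    (p : R) (X Y : {set 'I_n}) (i : 'I_n) : Prop :=
  i \in X /\ ((1 - p) * #|Y|%:R <= #|[set j in Y | (i, j) \in L]|%:R)%R.

Definition col_strong (R : realFieldType) (n : nat) (L : {set 'I_n * 'I_n})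
    (p : R) (X Y : {set 'I_n}) (j : 'I_n) : Prop :=
  j \in Y /\ ((1 - p) * #|X|%:R <= #|[set i in X | (i, j) \in L]|%:R)%R.

Definition strong_line (R : realFieldType) (n : nat) (L : {set 'I_n * 'I_n})
    (p : R) (X Y : {set 'I_n}) (l : line n) : Prop :=
  match l with
  | Row i => row_strong L p X Y i
  | Col j => col_strong L p X Y j
  end.

From HB Require Import structures.
From mathcomp Require Import all_boot all_order all_algebra all_fingroup.
From mathcomp Require Import ring lra zify.
Import Order.TTheory GRing.Theory Num.Theory.
Set Implicit Arguments. Unset Strict Implicit. Unset Printing Implicit Defensive.

(* Write m = |X| = |Y| and view the generalized diagonals of A[X,Y] as the
   bijections f : X -> Y.  A pair (e1, e2) of cells of X x Y is admissible when
   the two cells lie in different rows and different columns; its fiber is the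
   set of diagonals passing through both cells.  A permutation symmetry shows
   that all fibers have the same size c, and sorting the diagonals by the cells
   they use in two fixed rows gives  #diagonals = (m^2 - m) c.

   Let Q be a set of admissible pairs of large cells whose first cells all lie
   on one line and whose second cells all lie on another.  A diagonal meets a
   line at most once, so the fibers of Q are pairwise disjoint, and they consist
   of bad diagonals.  Hence q-goodness gives  |Q| <= q (m^2 - m)  (or q >= 1).

   If l1 <> l2 were strong lines of (X1,Y1) and (X2,Y2), they would carry
   s >= (1-p1)|X1| and t >= (1-p2)|X2| large cells, and at least s t / 4 pairs
   of these cells are separated (case analysis: parallel or crossing lines).
   Taking Q to be these pairs contradicts the density hypothesis. *)

Definition on_diag n (f : {ffun 'I_n -> 'I_n}) (e : 'I_n * 'I_n) : bool :=
  f e.1 == e.2.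

Definition on_line n (l : line n) (e : 'I_n * 'I_n) : bool :=
  match l with Row i => e.1 == i | Col j => e.2 == j end.

Definition separated n (e1 e2 : 'I_n * 'I_n) : bool :=
  (e1.1 != e2.1) && (e1.2 != e2.2).

Lemma line_eq_dec n (l1 l2 : line n) : {l1 = l2} + {l1 <> l2}.
Proof. by decide equality; apply: eq_comparable. Qed.

(* A permutation supported on Z can move any two distinct points of Z to any
   two distinct points of Z; this is the symmetry that equalizes fibers. *)
Lemma perm_on_two (T : finType) (Z : {set T}) a b a' b' :
  a \in Z -> b \in Z -> a' \in Z -> b' \in Z -> a != b -> a' != b' ->
  exists2 g : {perm T}, perm_on Z g & g a = a' /\ g b = b'.
Proof.
move=> aZ bZ a'Z b'Z ab a'b'.
have tperm_onZ x y : x \in Z -> y \in Z -> perm_on Z (tperm x y).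
  move=> xZ yZ; apply: subset_trans (tperm_on x y) _.
  by apply/subsetP=> z /set2P[] ->.
pose c := tperm a a' b.
have cZ : c \in Z by rewrite (perm_closed _ (tperm_onZ _ _ aZ a'Z)).
have a'c : a' != c by rewrite /c -{1}(tpermL a a') (inj_eq perm_inj).
exists (tperm a a' * tperm b' c)%g.
  exact: perm_onM (tperm_onZ _ _ _ _) (tperm_onZ _ _ _ _).
by rewrite !permM tpermL tpermR tpermD // eq_sym.
Qed.

Lemma card_offdiag (T : finType) (A : {set T}) :
  #|[set u in setX A A | u.1 != u.2]| = #|A| * #|A| - #|A|.
Proof.
have diagA : setX A A :&: [set u | u.1 == u.2] = [set (a, a) | a in A].
  apply/setP=> -[a b]; rewrite !inE /=; apply/idP/imsetP.
    by case/andP=> /andP[aA _] /eqP <-; exists a.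
  by case=> c cA [-> ->]; rewrite cA eqxx.
have card_diag : #|setX A A :&: [set u | u.1 == u.2]| = #|A|.
  by rewrite diagA card_imset // => a b [].
rewrite -cardsX -card_diag -(cardsID [set u | u.1 == u.2] (setX A A)) addKn.
by apply: eq_card => u; rewrite !inE andbC.
Qed.

Section Fibers.
Variables (n : nat) (X Y : {set 'I_n}).

Definition admissible (u : ('I_n * 'I_n) * ('I_n * 'I_n)) : bool :=
  [&& u.1.1 \in X, u.2.1 \in X, u.1.2 \in Y, u.2.2 \in Y & separated u.1 u.2].

Definition fiber (u : ('I_n * 'I_n) * ('I_n * 'I_n)) : {set {ffun 'I_n -> 'I_n}} :=
  [set f in bij_on X Y | on_diag f u.1 && on_diag f u.2].

Lemma bij_onP (f : {ffun 'I_n -> 'I_n}) :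
  f \in bij_on X Y <->
  [/\ forall i, i \in X -> f i \in Y,
      {in X &, injective f}
    & forall i, i \notin X -> f i = i].
Proof.
rewrite inE -andbA; split.
  case/and3P=> /forall_inP maps /forall_inP inj /forallP fix_out; split=> //.
    move=> i i' iX i'X e; have /forall_inP /(_ i' i'X) := inj i iX.
    by rewrite e eqxx => /eqP.
  by move=> i iX; apply/eqP; exact: implyP (fix_out i) iX.
case=> maps inj fix_out; apply/and3P; split.
- exact/forall_inP.
- apply/forall_inP=> i iX; apply/forall_inP=> i' i'X.
  by apply/implyP=> /eqP /inj ->.
- by apply/forallP=> i; apply/implyP=> iX; rewrite fix_out.
Qed.

Lemma diag_meets_line_once (l : line n) f (e e' : 'I_n * 'I_n) :
  f \in bij_on X Y -> e.1 \in X -> e'.1 \in X -> on_line l e -> on_line l e' ->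
  on_diag f e -> on_diag f e' -> e = e'.
Proof.
case/bij_onP=> _ inj _; case: e e' => [x y] [x' y'] /= xX x'X.
rewrite /on_diag /=; case: l => [i|j] /= /eqP-> /eqP->.
  by move=> /eqP <- /eqP <-.
by move=> /eqP fx /eqP fx'; rewrite (inj x x') // fx fx'.
Qed.

(* Conjugating by permutations of X and of Y sends the fiber of u injectively
   into the fiber of v. *)
Lemma card_fiber_le u v : admissible u -> admissible v -> #|fiber u| <= #|fiber v|.
Proof.
case: u v => [[x1 y1] [x2 y2]] [[x1' y1'] [x2' y2']].
rewrite /admissible /separated /=.
move=> /and5P[x1X x2X y1Y y2Y /andP[x12 y12]].
move=> /and5P[x1X' x2X' y1Y' y2Y' /andP[x12' y12']].
have [g gX [g1 g2]] := perm_on_two x1X' x2X' x1X x2X x12' x12.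
have [h hY [h1 h2]] := perm_on_two y1Y y2Y y1Y' y2Y' y12 y12'.
pose phi (f : {ffun 'I_n -> 'I_n}) := [ffun i => if i \in X then h (f (g i)) else i].
rewrite -(@card_in_imset _ _ phi); last first.
  move=> f f' /setIdP[/bij_onP[_ _ fout] _] /setIdP[/bij_onP[_ _ fout'] _] e.
  apply/ffunP=> k; have [kX|kX] := boolP (k \in X); last by rewrite fout ?fout'.
  have gkX : (g^-1)%g k \in X by rewrite -(perm_closed _ gX) permKV.
  move: (congr1 (fun u : {ffun 'I_n -> 'I_n} => u ((g^-1)%g k)) e).
  by rewrite /phi !ffunE gkX permKV => /perm_inj.
apply/subset_leq_card/subsetP.
move=> _ /imsetP[f /setIdP[fB /andP[/eqP /= f1 /eqP /= f2]] ->].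
have [fY finj fout] := iffLR (bij_onP f) fB.
rewrite inE /on_diag /= !ffunE x1X' x2X' g1 g2 f1 f2 h1 h2 !eqxx !andbT.
apply/bij_onP; split.
- by move=> i iX; rewrite ffunE iX (perm_closed _ hY) fY // (perm_closed _ gX).
- move=> i i' iX i'X; rewrite !ffunE iX i'X => /perm_inj /finj.
  by rewrite !(perm_closed _ gX) => /(_ iX i'X) /perm_inj.
- by move=> i iX; rewrite ffunE (negbTE iX).
Qed.

Lemma card_fiber_eq u v : admissible u -> admissible v -> #|fiber u| = #|fiber v|.
Proof. by move=> u_adm v_adm; apply/eqP; rewrite eqn_leq !card_fiber_le. Qed.

(* If the first cells of the pairs of Q share a line l1 and the second cells a
   line l2, the fibers of Q are disjoint, so their union has |Q| c elements. *)
Lemma card_fiber_union (l1 l2 : line n) (Q : {set ('I_n * 'I_n) * ('I_n * 'I_n)}) u0 :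
  admissible u0 ->
  (forall u, u \in Q -> [&& admissible u, on_line l1 u.1 & on_line l2 u.2]) ->
  #|\bigcup_(u in Q) fiber u| = #|Q| * #|fiber u0|.
Proof.
move=> u0_adm onQ.
pose F u := if u \in Q then fiber u else set0.
have disjF u v : u != v -> [disjoint F u & F v].
  move=> uv; apply/pred0P=> f /=; apply/negP=> /andP[]; rewrite /F.
  case: ifP => [uQ|]; last by rewrite inE.
  case: ifP => [vQ|_]; last by move=> _; rewrite inE.
  have /and3P[/and5P[u1X u2X _ _ _] u1l u2l] := onQ u uQ.
  have /and3P[/and5P[v1X v2X _ _ _] v1l v2l] := onQ v vQ.
  move=> /setIdP[fB /andP[fu1 fu2]] /setIdP[_ /andP[fv1 fv2]].
  case/negP: uv; rewrite [u]surjective_pairing [v]surjective_pairing.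
  rewrite (diag_meets_line_once fB u1X v1X u1l v1l fu1 fv1).
  by rewrite (diag_meets_line_once fB u2X v2X u2l v2l fu2 fv2).
have -> : \bigcup_(u in Q) fiber u = \bigcup_u F u by rewrite big_mkcond.
rewrite -sum1_card (partition_disjoint_bigcup addn (fun=> 1) disjF) -sum_nat_const.
rewrite [RHS]big_mkcond; apply: eq_bigr => u _; rewrite sum1_card /F.
case: ifP => [uQ|_]; last by rewrite cards0.
by apply: card_fiber_eq; case/and3P: (onQ u uQ).
Qed.

(* Every diagonal lies in exactly one fiber of the pairs of cells in the two
   rows of u0, hence  #diagonals = (m^2 - m) c. *)
Lemma card_bij_on u0 :
  admissible u0 -> #|bij_on X Y| = (#|Y| * #|Y| - #|Y|) * #|fiber u0|.
Proof.
move=> u0_adm; have /and5P[x1X x2X _ _ /andP[x12 _]] := u0_adm.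
set x1 := u0.1.1 in x1X x12 *; set x2 := u0.2.1 in x2X x12 *.
pose D := [set ((x1, y.1), (x2, y.2)) | y in [set y in setX Y Y | y.1 != y.2]].
have -> : bij_on X Y = \bigcup_(u in D) fiber u.
  apply/setP=> f; apply/idP/bigcupP => [fB|[u _ /setIdP[fB _]] //].
  have [fY finj _] := iffLR (bij_onP f) fB.
  exists ((x1, f x1), (x2, f x2)); last by rewrite inE fB /on_diag !eqxx.
  apply/imsetP; exists (f x1, f x2) => //; rewrite !inE /= !fY //=.
  by apply: contra_neq x12 => /finj; apply.
rewrite (@card_fiber_union (Row x1) (Row x2) _ u0) // ?card_in_imset ?card_offdiag //.
  by move=> [y1 y2] [y1' y2'] _ _ [-> ->].
move=> _ /imsetP[[y1 y2] /setIdP[/setXP[y1Y y2Y] y12] ->].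
by rewrite /admissible /separated /= x1X x2X y1Y y2Y x12 y12 !eqxx.
Qed.

End Fibers.

Lemma two_large_cells_not_good n (L : {set 'I_n * 'I_n}) (X : {set 'I_n}) f
    (e1 e2 : 'I_n * 'I_n) :
  e1.1 \in X -> e2.1 \in X -> e1.1 != e2.1 -> e1 \in L -> e2 \in L ->
  on_diag f e1 -> on_diag f e2 -> ~~ good_diag L X f.
Proof.
case: e1 e2 => [x1 y1] [x2 y2] /= x1X x2X x12 e1L e2L /eqP f1 /eqP f2.
have : 2 <= #|[set i in X | (i, f i) \in L]|.
  have := cards2 x1 x2; rewrite x12 => <-; apply/subset_leq_card/subsetP=> i.
  by rewrite !inE => /orP[] /eqP ->; rewrite ?f1 ?f2 ?x1X ?x2X.
by rewrite /good_diag; case: #|_| => [|[|]].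
Qed.

Lemma q_good_pairs (R : realFieldType) n (L : {set 'I_n * 'I_n}) (q : R)
    (X Y : {set 'I_n}) (l1 l2 : line n) (Q : {set ('I_n * 'I_n) * ('I_n * 'I_n)}) u0 :
  q_good L q X Y -> u0 \in Q ->
  (forall u, u \in Q ->
     [&& admissible X Y u, u.1 \in L, u.2 \in L, on_line l1 u.1 & on_line l2 u.2]) ->
  (1 <= q \/ #|Q|%:R <= q * (#|X| * #|X| - #|X|)%:R)%R.
Proof.
move=> [eXY hq] u0Q onQ.
have u0_adm : admissible X Y u0 by case/and5P: (onQ u0 u0Q).
set c := #|fiber X Y u0|; set d := #|X| * #|X| - #|X|.
set B := bij_on X Y; set G := [set f in B | good_diag L X f] in hq.
pose Bad := [set f in B | ~~ good_diag L X f].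
have card_B : #|B| = d * c by rewrite /B (card_bij_on u0_adm) -eXY.
have card_GBad : #|G| + #|Bad| = #|B|.
  rewrite -(cardsID [set f | good_diag L X f] B); congr (_ + _).
    by apply: eq_card => f; rewrite !inE.
  by apply: eq_card => f; rewrite !inE andbC.
have card_Q : #|Q| * c <= #|Bad|.
  rewrite -(@card_fiber_union _ _ _ l1 l2 Q u0) //; last first.
    by move=> u /onQ /and5P[-> _ _ -> ->].
  apply/subset_leq_card/subsetP=> f /bigcupP[u /onQ uQ /setIdP[fB /andP[f1 f2]]].
  have /and5P[/and5P[u1X u2X _ _ /andP[u12 _]] u1L u2L _ _] := uQ.
  by rewrite inE fB (two_large_cells_not_good u1X u2X u12 u1L u2L f1 f2).
have [c0|c_gt0] := posnP c.
  by left; move: hq; rewrite card_B c0 muln0 invr0 mulr0 subr_le0.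
right.
have d_gt0 : 0 < d.
  have /and5P[x1X x2X _ _ /andP[x12 _]] := u0_adm.
  have : 1 < #|X| by apply/card_gt1P; exists u0.1.1, u0.2.1.
  rewrite /d; nia.
have c_R : (0 < c%:R :> R)%R by rewrite ltr0n.
have B_R : (#|B|%:R = d%:R * c%:R :> R)%R by rewrite card_B natrM.
have GBad_R : (#|G|%:R + #|Bad|%:R = #|B|%:R :> R)%R by rewrite -natrD card_GBad.
have Q_R : (#|Q|%:R * c%:R <= #|Bad|%:R :> R)%R by rewrite -natrM ler_nat.
move: hq; rewrite ler_pdivlMr; last by rewrite B_R mulr_gt0 // ltr0n.
move=> hq; rewrite -(ler_pM2r c_R); apply: (le_trans Q_R).
rewrite -mulrA -B_R; lra.
Qed.

Definition line_cells n (L : {set 'I_n * 'I_n}) (X Y : {set 'I_n}) (l : line n) :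
    {set 'I_n * 'I_n} :=
  [set e in L | [&& e.1 \in X, e.2 \in Y & on_line l e]].

Lemma strong_line_cells (R : realFieldType) n (L : {set 'I_n * 'I_n}) (p : R)
    (X Y : {set 'I_n}) (l : line n) :
  #|Y| = #|X| -> strong_line L p X Y l ->
  ((1 - p) * #|X|%:R <= #|line_cells L X Y l|%:R)%R /\ #|line_cells L X Y l| <= #|X|.
Proof.
move=> eYX; case: l => [i|j] /= [lX strong].
- have -> : line_cells L X Y (Row i) = pair i @: [set j in Y | (i, j) \in L].
    apply/setP=> -[x y]; rewrite !inE /=; apply/idP/imsetP => [|[y' y'Y [-> ->]]].
      by case/and4P=> xyL _ yY /eqP ex; exists y; rewrite ?inE -ex ?yY.
    by move: y'Y; rewrite inE => /andP[-> ->]; rewrite lX eqxx.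
  rewrite card_imset; last by move=> a b [].
  rewrite -eYX; split=> //; apply/subset_leq_card/subsetP => y.
  by rewrite inE => /andP[].
- have -> : line_cells L X Y (Col j) = (fun x => (x, j)) @: [set x in X | (x, j) \in L].
    apply/setP=> -[x y]; rewrite !inE /=; apply/idP/imsetP => [|[x' x'X [-> ->]]].
      by case/and4P=> xyL xX _ /eqP ey; exists x; rewrite ?inE -ey ?xX.
    by move: x'X; rewrite inE => /andP[-> ->]; rewrite lX eqxx.
  rewrite card_imset; last by move=> a b [].
  split=> //; apply/subset_leq_card/subsetP => x.
  by rewrite inE => /andP[].
Qed.

Definition separated_pairs n (E1 E2 : {set 'I_n * 'I_n}) :
    {set ('I_n * 'I_n) * ('I_n * 'I_n)} :=
  [set u in setX E1 E2 | separated u.1 u.2].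

Lemma card_separated_parallel n (E1 E2 : {set 'I_n * 'I_n})
    (g : 'I_n * 'I_n -> 'I_n * 'I_n) :
  (forall e1 e2, e1 \in E1 -> e2 \in E2 -> ~~ separated e1 e2 -> e2 = g e1) ->
  #|E1| * #|E2| - #|E1| <= #|separated_pairs E1 E2|.
Proof.
move=> conflict; rewrite leq_subLR -cardsX.
rewrite -(cardsID [set u | separated u.1 u.2] (setX E1 E2)) addnC leq_add //.
  apply: (leq_trans _ (leq_imset_card (fun e => (e, g e)) E1)).
  apply/subset_leq_card/subsetP=> -[e1 e2].
  rewrite !inE /= => /andP[nsep /andP[e1E e2E]].
  by apply/imsetP; exists e1; rewrite // (conflict e1 e2).
by apply/subset_leq_card/subsetP=> u; rewrite !inE andbC.
Qed.

Lemma card_separated_crossing n (E1 E2 : {set 'I_n * 'I_n}) (c : 'I_n * 'I_n) :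
  (forall e1 e2, e1 \in E1 -> e2 \in E2 -> e1 != c -> e2 != c -> separated e1 e2) ->
  (#|E1| - 1) * (#|E2| - 1) <= #|separated_pairs E1 E2|.
Proof.
move=> no_conflict.
have card_D1 (E : {set 'I_n * 'I_n}) : #|E| - 1 <= #|E :\ c|.
  by rewrite (cardsD1 c E) leq_subLR leq_add2r leq_b1.
apply: (leq_trans (leq_mul (card_D1 E1) (card_D1 E2))).
rewrite -cardsX; apply/subset_leq_card/subsetP=> -[e1 e2].
rewrite !inE /= => /andP[/andP[e1c e1E] /andP[e2c e2E]].
by rewrite e1E e2E no_conflict.
Qed.

Lemma card_separated_lines n (l1 l2 : line n) (E1 E2 : {set 'I_n * 'I_n}) :
  l1 <> l2 ->
  (forall e, e \in E1 -> on_line l1 e) -> (forall e, e \in E2 -> on_line l2 e) ->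
  1 < #|E1| -> 1 < #|E2| ->
  #|E1| * #|E2| <= 4 * #|separated_pairs E1 E2|.
Proof.
move=> l12 onE1 onE2 s_gt1 t_gt1.
have parallel g :
    (forall e1 e2, e1 \in E1 -> e2 \in E2 -> ~~ separated e1 e2 -> e2 = g e1) ->
    #|E1| * #|E2| <= 4 * #|separated_pairs E1 E2|.
  move/card_separated_parallel=> h; apply: leq_trans (leq_mul (leqnn 4) h); nia.
have crossing c :
    (forall e1 e2, e1 \in E1 -> e2 \in E2 -> e1 != c -> e2 != c -> separated e1 e2) ->
    #|E1| * #|E2| <= 4 * #|separated_pairs E1 E2|.
  move/card_separated_crossing=> h; apply: leq_trans (leq_mul (leqnn 4) h); nia.
case: l1 l2 l12 onE1 onE2 => [i1|j1] [i2|j2] l12 onE1 onE2.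
- apply: (parallel (fun e => (i2, e.2))).
  move=> -[x1 y1] [x2 y2] /onE1 /eqP /= -> /onE2 /eqP /= ->.
  have i12 : i1 != i2 by apply/eqP=> ei; apply: l12; rewrite ei.
  by rewrite /separated /= i12 /= negbK => /eqP ->.
- apply: (crossing (i1, j2)) => -[x1 y1] [x2 y2] /onE1 /eqP /= -> /onE2 /eqP /= ->.
  by rewrite /separated /= !xpair_eqE !eqxx andbT /= => yj xi; rewrite eq_sym xi.
- apply: (crossing (i2, j1)) => -[x1 y1] [x2 y2] /onE1 /eqP /= -> /onE2 /eqP /= ->.
  by rewrite /separated /= !xpair_eqE !eqxx andbT /= => xi yj; rewrite xi eq_sym.
- apply: (parallel (fun e => (e.1, j2))).
  move=> -[x1 y1] [x2 y2] /onE1 /eqP /= -> /onE2 /eqP /= ->.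
  have j12 : j1 != j2 by apply/eqP=> ej; apply: l12; rewrite ej.
  by rewrite /separated /= j12 andbT negbK => /eqP ->.
Qed.

Lemma separated_line_cells n (L : {set 'I_n * 'I_n}) (X Y X1 Y1 X2 Y2 : {set 'I_n})
    (l1 l2 : line n) :
  X1 \subset X -> X2 \subset X -> Y1 \subset Y -> Y2 \subset Y ->
  forall u, u \in separated_pairs (line_cells L X1 Y1 l1) (line_cells L X2 Y2 l2) ->
  [&& admissible X Y u, u.1 \in L, u.2 \in L, on_line l1 u.1 & on_line l2 u.2].
Proof.
move=> /subsetP sX1 /subsetP sX2 /subsetP sY1 /subsetP sY2 u.
rewrite !inE => /andP[/andP[/and4P[u1L u1X u1Y u1l] /and4P[u2L u2X u2Y u2l]] sep].
by rewrite /admissible sep u1L u2L u1l u2l sX1 // sX2 // sY1 // sY2.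
Qed.

(* The numerical endgame: s t / 4 separated pairs exceed the q (m^2 - m)
   allowed by q-goodness once (1-p1)(1-p2)|X1||X2| >= 4 q m^2. *)
Lemma density_contradiction (R : realFieldType) (q p1 p2 : R) (x1 x2 s t m P : nat) :
  (1 < (1 - p1) * x1%:R)%R -> (1 < (1 - p2) * x2%:R)%R ->
  ((1 - p1) * x1%:R <= s%:R)%R -> ((1 - p2) * x2%:R <= t%:R)%R -> s <= m -> t <= m ->
  (4 * q <= (1 - p1) * (1 - p2) * ((x1 * x2)%:R / m%:R ^+ 2))%R ->
  (1 <= q \/ P%:R <= q * (m * m - m)%:R)%R -> s * t <= 4 * P -> False.
Proof.
set a := ((1 - p1) * x1%:R)%R; set b := ((1 - p2) * x2%:R)%R.
move=> a_gt1 b_gt1 a_le_s b_le_t s_le_m t_le_m dense pairs_le st_le_P.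
have s_R : (s%:R <= m%:R :> R)%R by rewrite ler_nat.
have t_R : (t%:R <= m%:R :> R)%R by rewrite ler_nat.
have m_gt0 : (0 < m%:R :> R)%R by lra.
have ab_le_st : (a * b <= s%:R * t%:R)%R by apply: ler_pM => //; lra.
have st_R : (s%:R * t%:R <= 4 * P%:R :> R)%R by rewrite -natrM -(natrM R 4) ler_nat.
have {}dense : (4 * q * (m%:R * m%:R) <= a * b)%R.
  rewrite -expr2 -ler_pdivlMr ?exprn_gt0 //; apply: (le_trans dense).
  by rewrite /a /b natrM le_eqVlt; apply/orP; left; apply/eqP; ring.
case: pairs_le => [q_ge1|P_le].
  have : (m%:R * m%:R <= s%:R * t%:R :> R)%R by apply: le_trans ab_le_st; nra.
  nra.
have m_le_mm : m <= m * m by rewrite leq_pmull // -(ltr0n R).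
move: P_le; rewrite natrB // natrM => P_le.
nra.
Qed.

Theorem lemma2p12 (R : realFieldType) (n : nat) (L : {set 'I_n * 'I_n})
    (q p1 p2 : R) (X Y X1 Y1 X2 Y2 : {set 'I_n}) (l1 l2 : line n) :
  q_good L q X Y ->
  X1 \subset X -> X2 \subset X -> Y1 \subset Y -> Y2 \subset Y ->
  #|Y1| = #|X1| -> #|Y2| = #|X2| ->
  strong_line L p1 X1 Y1 l1 ->
  strong_line L p2 X2 Y2 l2 ->
  (1 < (1 - p1) * #|X1|%:R)%R ->
  (1 < (1 - p2) * #|X2|%:R)%R ->
  (4 * q <= (1 - p1) * (1 - p2) * ((#|X1| * #|X2|)%:R / (#|X|%:R ^+ 2)))%R ->
  l1 = l2.
Proof.
move=> hq sX1 sX2 sY1 sY2 eY1 eY2 strong1 strong2 a_gt1 b_gt1 dense.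
case: (line_eq_dec l1 l2) => // l12; exfalso.
set E1 := line_cells L X1 Y1 l1; set E2 := line_cells L X2 Y2 l2.
have [E1_lb E1_ub] := strong_line_cells eY1 strong1.
have [E2_lb E2_ub] := strong_line_cells eY2 strong2.
have E1_gt1 : 1 < #|E1| by rewrite -(ltr_nat R); apply: lt_le_trans E1_lb.
have E2_gt1 : 1 < #|E2| by rewrite -(ltr_nat R); apply: lt_le_trans E2_lb.
have on_l1 e : e \in E1 -> on_line l1 e by rewrite inE => /and4P[].
have on_l2 e : e \in E2 -> on_line l2 e by rewrite inE => /and4P[].
have many_pairs := card_separated_lines l12 on_l1 on_l2 E1_gt1 E2_gt1.
have [u0 u0Q] : exists u0, u0 \in separated_pairs E1 E2.
  by apply/card_gt0P; move: many_pairs; rewrite -(ltn_pmul2l (isT : 0 < 4)); nia.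
have few_pairs := q_good_pairs hq u0Q (separated_line_cells sX1 sX2 sY1 sY2).
apply: (density_contradiction a_gt1 b_gt1 E1_lb E2_lb _ _ dense few_pairs many_pairs).
- exact: leq_trans E1_ub (subset_leq_card sX1).
- exact: leq_trans E2_ub (subset_leq_card sX2).
Qed.
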